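(* Let $\mathbb{G}$ be a stratified group. Then $\mathbb{R}$ factorizes $\mathbb{G}$; that is: $\mathbb{R}$ is an h-quotient of $\mathbb{G}$ and every normal homogeneous subgroup $N$ of $\mathbb{G}$ with $\mathbb{G}/N$ h-isomorphic to $\mathbb{R}$ has a complementary homogeneous subgroup; and $\mathbb{R}$ h-embeds into $\mathbb{G}$ and every homogeneous subgroup $H$ of $\mathbb{G}$ h-isomorphic to $\mathbb{R}$ has a complementary normal homogeneous subgroup.
   Context: Graded group: connected simply connected real Lie group with Lie algebra $V_1\oplus\cdots\oplus V_\iota$, $[V_i,V_j]\subset V_{i+j}$; stratified if $[V_i,V_j]=V_{i+j}$; dilations act by $r^i$ on $V_i$. $\mathbb{R}^k$ is the graded group with single layer and dilations $v\mapsto rv$. h-homomorphism: group homomorphism commuting with dilations; h-isomorphism: invertible h-homomorphism. Homogeneous subgroup: closed connected simply connected Lie subgroup invariant under dilations. $\mathbb{M}$ is an h-quotient of $\mathbb{G}$ if $\mathbb{G}/N$ is h-isomorphic to $\mathbb{M}$ for some normal homogeneous subgroup $N$; $\mathbb{M}$ h-embeds into $\mathbb{G}$ if some homogeneous subgroup of $\mathbb{G}$ is h-isomorphic to $\mathbb{M}$. Homogeneous subgroups $A,B$ are complementary if $AB=\mathbb{G}$ and $A\cap B=\{e\}$. *)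

From HB Require Import structures.
From mathcomp Require Import all_boot all_order all_algebra.
From mathcomp Require Import all_classical all_reals all_analysis.
Set Implicit Arguments. Unset Strict Implicit. Unset Printing Implicit Defensive.
Import Order.TTheory GRing.Theory Num.Theory.
Local Open Scope ring_scope.
Local Open Scope classical_set_scope.

Definition poly_fun (R : realType) (k : nat) (f : 'rV[R]_k -> R) : Prop :=
  exists s : seq (R * ('I_k -> nat)),
    forall x, f x = \sum_(m <- s) m.1 * \prod_(i < k) x ord0 i ^+ m.2 i.

Definition wdil (R : realType) (n : nat) (w : 'I_n -> nat) (r : R) (x : 'rV[R]_n)
  : 'rV[R]_n := \row_i (r ^+ w i * x ord0 i).

(* A graded group, presented in exponential(-type) coordinates as R^n with a
   polynomial group law for which the weighted dilations are automorphisms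
   (a "homogeneous group" in the sense of Folland--Stein).  Layer V_j of the
   Lie algebra (identified with R^n = T_0) is spanned by the coordinates of
   weight j. *)
Record gradedGroup (R : realType) := GradedGroup {
  gdim : nat;
  gwt : 'I_gdim -> nat;
  gmul : 'rV[R]_gdim -> 'rV[R]_gdim -> 'rV[R]_gdim;
  ginv : 'rV[R]_gdim -> 'rV[R]_gdim;
  gwt_pos : forall i, (0 < gwt i)%N;
  gmulA : associative gmul;
  gmul0x : left_id 0 gmul;
  gmulx0 : right_id 0 gmul;
  gmulVx : forall x, gmul (ginv x) x = 0;
  gmulxV : forall x, gmul x (ginv x) = 0;
  gmul_poly : forall i : 'I_gdim,
    poly_fun (fun z : 'rV[R]_(gdim + gdim) => gmul (lsubmx z) (rsubmx z) ord0 i);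
  gdil_morph : forall (r : R) x y, 0 < r ->
    wdil gwt r (gmul x y) = gmul (wdil gwt r x) (wdil gwt r y)
}.

Arguments gdim {R} g.
Arguments gwt {R} g i.
Arguments gmul {R} g x y.
Arguments ginv {R} g x.

Unset Implicit Arguments.
Section GradedDefs.
Context {R : realType} (G : gradedGroup R).
Local Notation V := ('rV[R^o]_(gdim G)).

Definition dil (r : R) (x : V) : V := wdil (gwt G) r x.

Definition gcomm (x y : V) : V :=
  gmul G (gmul G (gmul G x y) (ginv G x)) (ginv G y).

(* Lie bracket on the Lie algebra T_0 = R^n: second-order part of the
   group commutator, [X,Y] = lim_{t->0+} t^-2 (tX)(tY)(tX)^-1(tY)^-1. *)
Definition bracket (X Y : V) : V :=
  lim ((fun t : R => t^-2 *: gcomm (t *: X) (t *: Y)) @ 0^'+).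

Definition layer (j : nat) : set V :=
  [set v | forall i, gwt G i != j -> v ord0 i = 0].

(* [V_1, V_j] : linear span of brackets (bilinearity lets us use finite sums) *)
Definition bracket_span (A B : set V) : set V :=
  [set Z | exists s : seq (V * V),
     (forall p, p \in s -> A p.1 /\ B p.2) /\ Z = \sum_(p <- s) bracket p.1 p.2].

Definition stratified : Prop :=
  forall j, (0 < j)%N -> layer j.+1 = bracket_span (layer 1) (layer j).

Definition is_subgroup (H : set V) : Prop :=
  H 0 /\ (forall x y, H x -> H y -> H (gmul G x y)) /\ (forall x, H x -> H (ginv G x)).

Definition homogeneous (H : set V) : Prop :=
  is_subgroup H /\ closed H /\ connected H /\
  (forall r x, 0 < r -> H x -> H (dil r x)).

Definition normal (N : set V) : Prop :=
  forall g x, N x -> N (gmul G (gmul G g x) (ginv G g)).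

Definition complementary (A B : set V) : Prop :=
  (forall g, exists a b, A a /\ B b /\ g = gmul G a b) /\
  (forall x, A x -> B x -> x = 0).

Definition hhom_to_R (phi : V -> R) : Prop :=
  (forall x y, phi (gmul G x y) = phi x + phi y) /\
  (forall r x, 0 < r -> phi (dil r x) = r * phi x).

Definition hhom_from_R (psi : R -> V) : Prop :=
  (forall s t, psi (s + t) = gmul G (psi s) (psi t)) /\
  (forall r t, 0 < r -> psi (r * t) = dil r (psi t)).

(* G/N is h-isomorphic to R: there is a surjective h-homomorphism G -> R
   with kernel N (equivalently, an h-isomorphism G/N -> R). *)
Definition quotient_is_R (N : set V) : Prop :=
  exists phi : V -> R, hhom_to_R phi /\ (forall t, exists x, phi x = t) /\
    (forall x, phi x = 0 <-> N x).

Definition subgroup_is_R (H : set V) : Prop :=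
  exists psi : R -> V, hhom_from_R psi /\ injective psi /\
    (forall x, H x <-> exists t, psi t = x).

End GradedDefs.

From HB Require Import structures.
From mathcomp Require Import all_boot all_order all_algebra.
From mathcomp Require Import all_classical all_reals all_analysis.
From mathcomp Require Import zify ring lra.
Import Order.TTheory GRing.Theory Num.Theory numFieldNormedType.Exports.
Local Open Scope ring_scope.
Local Open Scope classical_set_scope.

(* In these coordinates each coordinate of a product is a weighted-homogeneous polynomial,
   so (ab)_i - a_i - b_i only depends on coordinates of weight < w i.  Hence the
   coordinates of weight one are additive: each of them is a surjective h-homomorphism
   onto R with normal homogeneous kernel.  The points x with x * x = wdil 2 x are
   determined by, and exist for, any prescribed coordinates of weight one, and
   t |-> wdil t x is then an h-homomorphism from R.  An h-homomorphism phi : G -> R kills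
   every element whose coordinates of weight one vanish, so a line t |-> wdil t y with
   phi y = 1 complements ker phi; dually, a coordinate of weight one that does not vanish
   on a homogeneous line H gives a normal complement of H.  Stratification is only used
   to ensure that some coordinate has weight one. *)

Lemma continuous_row (R : realType) (T : topologicalType) n (f : 'I_n -> T -> R^o) :
  (forall i, continuous (f i)) -> continuous (fun t => (\row_i f i t : 'rV[R^o]_n)).
Proof.
move=> fc t A [P /= Pn sPA].
apply: (filterS (P := [set s | forall i j, P i j ((\row_i f i s : 'rV[R^o]_n) i j)])).
  by move=> s Ps; apply: sPA.
apply: filter_forall => i; apply: filter_forall => j.
have := fc j t (P i j); move: (Pn i j); rewrite mxE => Pn0 /(_ Pn0) fP.
near=> s; rewrite mxE; near: s; exact: fP.
Unshelve. all: by end_near. Qed.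

Lemma connected_range (R : realType) (T : topologicalType) (g : R -> T) :
  continuous g -> connected (range g).
Proof.
move=> gc; apply: connected_continuous_connected.
  by apply/connected_intervalP => x y _ _ z _.
by move=> x; apply: continuous_subspaceT.
Qed.

Lemma connected_coord_ker (R : realType) n (k : 'I_n) :
  connected [set g : 'rV[R^o]_n | g 0 k = 0].
Proof.
have -> : [set g : 'rV[R^o]_n | g 0 k = 0] =
    \bigcup_(g in [set g : 'rV[R^o]_n | g 0 k = 0]) range (fun t : R => t *: g).
  apply/seteqP; split.
    by move=> g gk; exists g => //; exists 1 => //; rewrite scale1r.
  by move=> _ [g gk [t _ <-]]; rewrite /= mxE gk mulr0.
apply: bigcup_connected.
  by exists 0 => g _; exists 0 => //; rewrite scale0r.
move=> g _; apply: connected_range.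
have -> : (fun t : R => t *: g) = (fun t => \row_i (('X * (g 0 i)%:P).[t] : R^o)).
  by apply/funext => t; apply/rowP => i; rewrite !mxE hornerM hornerX hornerC.
by apply: continuous_row => i; exact: continuous_horner.
Qed.

Lemma closed_poly_graph (R : realType) n (k : 'I_n) (P : 'I_n -> {poly R}) :
  closed [set g : 'rV[R^o]_n | forall i, g 0 i = (P i).[g 0 k]].
Proof.
have -> : [set g : 'rV[R^o]_n | forall i, g 0 i = (P i).[g 0 k]] =
    \bigcap_(i in [set: 'I_n])
      ((fun g : 'rV[R^o]_n => g 0 i - (P i).[g 0 k]) @^-1` [set 0]).
  apply/seteqP; split=> g gP i; first by move=> _ /=; rewrite gP subrr.
  by apply/eqP; rewrite -subr_eq0; apply/eqP; exact: gP.
apply: closed_bigI => i _; apply: preimage_closed; last exact: closed_eq.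
move=> g _; apply: (@continuousB R^o R^o _ (fun g : 'rV[R^o]_n => g 0 i)
  (fun g : 'rV[R^o]_n => (P i).[g 0 k])); first exact: coord_continuous.
apply: (@continuous_comp _ _ _ (fun g : 'rV[R^o]_n => g 0 k) (horner (P i))).
  exact: coord_continuous.
exact: continuous_horner.
Qed.

Lemma poly_natS_roots_eq0 (R : numDomainType) (P : {poly R}) :
  (forall k : nat, P.[k.+1%:R] = 0) -> P = 0.
Proof.
move=> P0; apply/eqP; apply: contraT => nz.
have := max_poly_roots nz (rs := [seq k.+1%:R | k <- iota 0 (size P)]).
rewrite size_map size_iota ltnn; apply.
  by apply/allP => _ /mapP [k _ ->]; apply/rootP/P0.
by rewrite map_inj_uniq ?iota_uniq // => a b /eqP; rewrite eqr_nat => /eqP [].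
Qed.

Lemma eq_poly_fun_natS (R : numDomainType) (f g : R -> R) :
  (exists P : {poly R}, forall t, f t = P.[t]) ->
  (exists Q : {poly R}, forall t, g t = Q.[t]) ->
  (forall k : nat, f k.+1%:R = g k.+1%:R) -> f =1 g.
Proof.
move=> [P fP] [Q gQ] fg t.
have /eqP : P - Q = 0.
  by apply: poly_natS_roots_eq0 => k; rewrite hornerD hornerN -fP -gQ fg subrr.
by rewrite subr_eq0 fP gQ => /eqP ->.
Qed.

Lemma additive_pos_homog_linear (R : realFieldType) (f : R -> R) :
  {morph f : s t / s + t} -> (forall r t, 0 < r -> f (r * t) = r * f t) ->
  forall t, f t = t * f 1.
Proof.
move=> fD fZ.
have f0 : f 0 = 0 by apply: (addrI (f 0)); rewrite -fD !addr0.
move=> t; case: (ltrgt0P t) => [t0|t0|->]; last by rewrite f0 mul0r.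
  by rewrite -[in LHS](mulr1 t) fZ.
have := fD t (- t); rewrite subrr f0 -[in f (- t)](mulr1 (- t)) fZ ?oppr_gt0 //.
by move=> e; lra.
Qed.

Lemma expr2n_sub2_neq0 (R : realFieldType) {k : nat} : (1 < k)%N -> (2 : R) ^+ k - 2 != 0.
Proof.
move=> k_gt1; have : (2 : R) ^+ 2 <= 2 ^+ k by rewrite ler_eXn2l // ltr1n.
by rewrite expr2 => le4; apply/eqP => e; lra.
Qed.

Section GradedGroup.
Context {R : realType} {G : gradedGroup R}.
Local Notation n := (gdim G).
Local Notation w := (gwt G).
Local Notation mul := (gmul G).
Local Notation inv := (ginv G).
Local Notation V := 'rV[R]_n.

Lemma ginv_unique (a b : V) : mul a b = 0 -> inv a = b.
Proof. by move=> ab0; rewrite -[inv a](@gmulx0 _ G) -ab0 gmulA gmulVx gmul0x. Qed.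

Lemma ginv0 : inv 0 = 0.
Proof. by apply: ginv_unique; rewrite gmul0x. Qed.

Lemma gmul_idem_eq0 (p : V) : mul p p = p -> p = 0.
Proof. by move=> pp; rewrite -[p](gmul0x) -(gmulVx p) -gmulA pp gmulVx. Qed.

Lemma wdilE r (x : V) i : wdil w r x 0 i = r ^+ w i * x 0 i.
Proof. by rewrite mxE. Qed.

Lemma wdilM r s (x : V) : wdil w r (wdil w s x) = wdil w (r * s) x.
Proof. by apply/rowP => i; rewrite !mxE exprMn mulrA. Qed.

Lemma wdil0x (x : V) : wdil w 0 x = 0.
Proof.
apply/rowP => i; rewrite !mxE expr0n.
by have := @gwt_pos _ G i; case: (w i) => // k _; rewrite mul0r.
Qed.

Lemma wdilx0 r : wdil w r (0 : V) = 0.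
Proof. by apply/rowP => i; rewrite !mxE mulr0. Qed.

Lemma wdil1 (x : V) : wdil w 1 x = x.
Proof. by apply/rowP => i; rewrite !mxE expr1n mul1r. Qed.

(* A pair (a, b) is encoded as row_mx a b, as in gmul_poly. *)
Definition wpair (j : 'I_(n + n)) : nat :=
  w (match fintype.split j with inl k => k | inr k => k end).

Definition monomial (m : 'I_(n + n) -> nat) (z : 'rV[R]_(n + n)) : R :=
  \prod_(j < n + n) z 0 j ^+ m j.

Definition wdeg (m : 'I_(n + n) -> nat) : nat := \sum_(j < n + n) m j * wpair j.

Lemma wpair_gt0 j : (0 < wpair j)%N.
Proof. exact: gwt_pos. Qed.

Lemma row_mx_wdil r (a b : V) j :
  row_mx (wdil w r a) (wdil w r b) 0 j = r ^+ wpair j * row_mx a b 0 j.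
Proof. by rewrite !mxE /wpair; case: (fintype.split j) => k; rewrite mxE. Qed.

Lemma monomial_wdil r (a b : V) m :
  monomial m (row_mx (wdil w r a) (wdil w r b)) = r ^+ wdeg m * monomial m (row_mx a b).
Proof.
rewrite /monomial /wdeg.
under eq_bigr do rewrite row_mx_wdil exprMn -exprM.
by rewrite big_split /= prodrXr; under eq_bigr do rewrite mulnC.
Qed.

(* Both sides of (r-dilated product)_i = r^(w i) (product)_i are polynomials in r;
   comparing them at r = 1, 2, ... keeps only the monomials of weighted degree w i. *)
Lemma gmul_entry_homog i : exists s : seq (R * ('I_(n + n) -> nat)),
  forall a b, mul a b 0 i = \sum_(m <- s | wdeg m.2 == w i) m.1 * monomial m.2 (row_mx a b).
Proof.
have [s sE0] := @gmul_poly _ G i; exists s => a b.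
have sE z : mul (lsubmx z) (rsubmx z) 0 i = \sum_(m <- s) m.1 * monomial m.2 z := sE0 z.
pose P : {poly R} := \sum_(m <- s) (m.1 * monomial m.2 (row_mx a b)) *: 'X^(wdeg m.2)
   - (mul a b 0 i) *: 'X^(w i).
have P0 : P = 0.
  apply: poly_natS_roots_eq0 => k; set r : R := k.+1%:R.
  have r_gt0 : 0 < r by rewrite ltr0Sn.
  rewrite /P hornerD hornerN horner_sum hornerZ hornerXn.
  under eq_bigr do rewrite hornerZ hornerXn.
  have := sE (row_mx (wdil w r a) (wdil w r b)).
  rewrite row_mxKl row_mxKr -gdil_morph // mxE.
  under [X in _ = X]eq_bigr do rewrite monomial_wdil.
  move=> rE; apply/eqP; rewrite subr_eq0 mulrC rE.
  by apply/eqP; apply: eq_bigr => m _ /=; ring.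
have := congr1 (fun p : {poly R} => p`_(w i)) P0.
rewrite coef0 /P coefB coef_sum coefZ coefXn eqxx mulr1.
under eq_bigr do rewrite coefZ coefXn.
move/eqP; rewrite subr_eq0 => /eqP <-.
rewrite [RHS]big_mkcond /=; apply: eq_bigr => m _; rewrite eq_sym.
by case: (wdeg m.2 == w i); rewrite ?mulr1 ?mulr0.
Qed.

Lemma monomial_var {m i j0} : wdeg m = w i -> (0 < m j0)%N -> (w i <= wpair j0)%N ->
  forall z, monomial m z = z 0 j0.
Proof.
move=> mdeg m_gt0 wj0.
have e : (m j0 * wpair j0 + \sum_(j < n + n | j != j0) m j * wpair j)%N = w i.
  by rewrite -mdeg /wdeg [in RHS](bigD1 j0).
have w_gt0 := wpair_gt0 j0.
have m1 : m j0 = 1%N by nia.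
have rest0 : (\sum_(j < n + n | j != j0) m j * wpair j == 0)%N.
  by apply/eqP; move: e; rewrite m1; lia.
have m0 j : j != j0 -> m j = 0%N.
  move=> jj0; move: rest0; rewrite sum_nat_eq0 => /forallP /(_ j).
  by rewrite jj0 /= muln_eq0 => /orP [/eqP //|]; rewrite eqn0Ngt wpair_gt0.
move=> z; rewrite /monomial (bigD1 j0) //= m1 expr1 big1 ?mulr1 //.
by move=> j /m0 ->; rewrite expr0.
Qed.

(* Monomials of weighted degree w i either only involve variables of weight < w i,
   or are a single variable of weight w i. *)
Lemma gmul_entry_split i : exists L l : 'rV[R]_(n + n) -> R,
  [/\ forall a b, mul a b 0 i = L (row_mx a b) + l (row_mx a b),
      forall z z' : 'rV_(n + n), (forall j, (wpair j < w i)%N -> z 0 j = z' 0 j) -> L z = L z' &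
      forall z z', l (z + z') = l z + l z'].
Proof.
have [s sE] := gmul_entry_homog i.
pose low m := [forall j, (0 < m j)%N ==> (wpair j < w i)%N].
exists (fun z => \sum_(m <- s | (wdeg m.2 == w i) && low m.2) m.1 * monomial m.2 z).
exists (fun z => \sum_(m <- s | (wdeg m.2 == w i) && ~~ low m.2) m.1 * monomial m.2 z).
split.
- by move=> a b; rewrite sE (bigID (fun m => low m.2)).
- move=> z z' zz'; apply: eq_bigr => m /andP [_ /forallP lowm]; congr (_ * _).
  apply: eq_bigr => j _; case: (posnP (m.2 j)) => [->|m_gt0]; first by rewrite !expr0.
  by rewrite zz' // (implyP (lowm j) m_gt0).
- move=> z z'; rewrite -big_split; apply: eq_bigr => m /andP [/eqP mdeg /forallPn [j0]].
  rewrite negb_imply -leqNgt => /andP [m_gt0 wj0].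
  by rewrite !(monomial_var mdeg m_gt0 wj0) mxE mulrDr.
Qed.

Definition gmul_corr i (a b : V) : R := mul a b 0 i - a 0 i - b 0 i.

Lemma gmul_corr_low i (a b a' b' : V) :
  (forall j, (w j < w i)%N -> a 0 j = a' 0 j /\ b 0 j = b' 0 j) ->
  gmul_corr i a b = gmul_corr i a' b'.
Proof.
move=> aa'.
have [L [l [mulE L_low lD]]] := gmul_entry_split i.
have L_row (x y x' y' : V) :
    (forall k, (w k < w i)%N -> x 0 k = x' 0 k /\ y 0 k = y' 0 k) ->
    L (row_mx x y) = L (row_mx x' y').
  move=> xx'; apply: L_low => j; rewrite /wpair !mxE.
  by case: (fintype.split j) => k /xx' [].
have l0 : l 0 = 0 by apply: (addrI (l 0)); rewrite -lD !addr0.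
have L0 : L (row_mx 0 0) = 0.
  by have := mulE 0 0; rewrite gmul0x row_mx0 l0 addr0 mxE.
have lE (x y : V) : (forall k, (w k < w i)%N -> x 0 k = 0 /\ y 0 k = 0) ->
    l (row_mx x y) = mul x y 0 i.
  by move=> xy0; rewrite mulE (L_row _ _ 0 0) ?L0 ?add0r // => k /xy0; rewrite !mxE.
have ab : row_mx a b = row_mx (a - a') 0 + row_mx 0 (b - b') + row_mx a' b'.
  by rewrite !add_row_mx addr0 add0r !subrK.
have low_diff k : (w k < w i)%N -> (a - a') 0 k = 0 /\ (b - b') 0 k = 0.
  by move=> /aa' [ak bk]; rewrite !mxE ak bk !subrr.
have la : l (row_mx (a - a') 0) = a 0 i - a' 0 i.
  rewrite lE; first by rewrite gmulx0 !mxE.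
  by move=> k /low_diff [ak _]; rewrite ak mxE.
have lb : l (row_mx 0 (b - b')) = b 0 i - b' 0 i.
  rewrite lE; first by rewrite gmul0x !mxE.
  by move=> k /low_diff [_ bk]; rewrite bk mxE.
rewrite /gmul_corr !mulE (L_row a b a' b') // ab !lD la lb; ring.
Qed.

Lemma gmul_entry_low i (a b : V) :
  (forall j, (w j < w i)%N -> a 0 j = 0 /\ b 0 j = 0) -> mul a b 0 i = a 0 i + b 0 i.
Proof.
move=> ab0; have : gmul_corr i a b = gmul_corr i 0 0.
  by apply: gmul_corr_low => j /ab0; rewrite !mxE.
by rewrite /gmul_corr gmul0x !mxE => e; lra.
Qed.

Lemma gmul_w1 i (a b : V) : w i = 1%N -> mul a b 0 i = a 0 i + b 0 i.
Proof.
move=> wi; apply: gmul_entry_low => j; rewrite wi ltnS leqn0 => /eqP wj.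
by have := @gwt_pos _ G j; rewrite wj.
Qed.

Lemma ginv_w1 i (a : V) : w i = 1%N -> inv a 0 i = - a 0 i.
Proof.
move=> wi; apply/eqP; rewrite -addr_eq0 addrC -gmul_w1 //.
by rewrite gmulxV mxE.
Qed.

Definition filt m (x : V) := forall j, (w j < m)%N -> x 0 j = 0.

Lemma gmul_filt_entry {m} {a b : V} : filt m a -> filt m b ->
  forall i, (w i <= m)%N -> mul a b 0 i = a 0 i + b 0 i.
Proof.
move=> am bm i wi; apply: gmul_entry_low => j wj; split; [apply: am|apply: bm]; lia.
Qed.

Lemma filt_gmul {m} {a b : V} : filt m a -> filt m b -> filt m (mul a b).
Proof. by move=> am bm j wj; rewrite (gmul_filt_entry am bm) ?am ?bm ?addr0 //; lia. Qed.

Lemma ginv_filt_entry {m} {a : V} : filt m a -> forall i, (w i <= m)%N -> inv a 0 i = - a 0 i.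
Proof.
move=> am.
suff ind k i : (w i <= k)%N -> (w i <= m)%N -> inv a 0 i = - a 0 i by move=> i; exact: ind.
elim: k i => [|k IH] i wik wim; first by have := @gwt_pos _ G i; lia.
have : mul a (inv a) 0 i = a 0 i + inv a 0 i.
  apply: gmul_entry_low => j wj; have aj : a 0 j = 0 by apply: am; lia.
  by rewrite (IH j) ?aj ?oppr0 //; lia.
by rewrite gmulxV mxE => e; lra.
Qed.

Lemma filt_ginv {m} {a : V} : filt m a -> filt m (inv a).
Proof. by move=> am j wj; rewrite (ginv_filt_entry am) ?am ?oppr0 //; lia. Qed.

Fixpoint gpow (x : V) k := if k is k'.+1 then mul x (gpow x k') else 0.

Lemma gpowD x k l : gpow x (k + l) = mul (gpow x k) (gpow x l).
Proof. by elim: k => [|k IH] /=; rewrite ?gmul0x // IH gmulA. Qed.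

Lemma wdil_gpow r x k : 0 < r -> wdil w r (gpow x k) = gpow (wdil w r x) k.
Proof. by move=> r_gt0; elim: k => [|k IH] /=; rewrite ?wdilx0 // gdil_morph // IH. Qed.

Lemma gpow_w1 x k i : w i = 1%N -> gpow x k 0 i = k%:R * x 0 i.
Proof.
move=> wi; elim: k => [|k IH] /=; first by rewrite mxE mul0r.
by rewrite gmul_w1 // IH -[k.+1]addn1 natrD; ring.
Qed.

Lemma gpow_filt {m x} k : filt m x ->
  filt m (gpow x k) /\ forall i, (w i <= m)%N -> gpow x k 0 i = k%:R * x 0 i.
Proof.
move=> xm; elim: k => [|k [powm IH]] /=; first by split=> i _; rewrite mxE ?mul0r.
split; first exact: filt_gmul.
by move=> i wi; rewrite (gmul_filt_entry xm powm) // IH // -[k.+1]addn1 natrD; ring.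
Qed.

(* x * x = wdil 2 x characterises the exponentials x = exp X of vectors X of the
   first layer: x * x = exp (2 X) while wdil 2 x = exp (wdil 2 X). *)
Definition horizontal (x : V) := mul x x = wdil w 2 x.

Lemma horizontal_unique x y : horizontal x -> horizontal y ->
  (forall j, w j = 1%N -> x 0 j = y 0 j) -> x = y.
Proof.
move=> hx hy xy1.
suff ind k i : (w i <= k)%N -> x 0 i = y 0 i by apply/rowP => i; exact: ind.
elim: k i => [|k IH] i wik; first by have := @gwt_pos _ G i; lia.
have [wi1|wi1] := eqVneq (w i) 1%N; first exact: xy1.
have wi_gt1 : (1 < w i)%N by have := @gwt_pos _ G i; lia.
have := @gmul_corr_low i x x y y (fun j wj => conj (IH j ltac:(lia)) (IH j ltac:(lia))).
rewrite /gmul_corr hx hy !wdilE => e.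
have /eqP : (2 ^+ w i - 2) * (x 0 i - y 0 i) = 0 by rewrite mulrBr !mulrBl; lra.
by rewrite mulf_eq0 (negbTE (expr2n_sub2_neq0 R wi_gt1)) subr_eq0 => /eqP.
Qed.

(* Since (x * x)_i = 2 x_i + gmul_corr i x x, horizontality prescribes x_i from the
   coordinates of lower weight. *)
Definition horizontal_step (v x : V) : V :=
  \row_i (if w i == 1%N then v 0 i else gmul_corr i x x / (2 ^+ w i - 2)).

Lemma horizontal_step_low v (a b : V) i :
  (forall j, (w j < w i)%N -> a 0 j = b 0 j) ->
  horizontal_step v a 0 i = horizontal_step v b 0 i.
Proof.
move=> ab; rewrite !mxE; case: ifP => // _; congr (_ / _).
by apply: gmul_corr_low => j wj; split; apply: ab.
Qed.

Lemma horizontal_exists (v : V) :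
  exists x, horizontal x /\ forall j, w j = 1%N -> x 0 j = v 0 j.
Proof.
have stable k i : (w i <= k)%N ->
    iter k (horizontal_step v) 0 0 i = iter k.+1 (horizontal_step v) 0 0 i.
  elim: k i => [|k IH] i wik; first by have := @gwt_pos _ G i; lia.
  by rewrite (iterS k) (iterS k.+1); apply: horizontal_step_low => j wj; apply: IH; lia.
pose x := iter (\max_(i < n) w i) (horizontal_step v) 0.
have xE : horizontal_step v x = x.
  by apply/rowP => i; rewrite /x -iterS; symmetry; apply: stable; exact: leq_bigmax.
exists x; split; last by move=> j wj; rewrite -xE mxE wj eqxx.
apply/rowP => i; rewrite mxE.
have [wi1|wi1] := eqVneq (w i) 1%N; first by rewrite gmul_w1 // wi1 expr1; ring.
have wi_gt1 : (1 < w i)%N by have := @gwt_pos _ G i; lia.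
have := congr1 (fun y : V => y 0 i) xE; rewrite /= mxE (negbTE wi1) /gmul_corr => e.
have {}e : mul x x 0 i - x 0 i - x 0 i = x 0 i * (2 ^+ w i - 2).
  by rewrite -[in RHS]e divfK // expr2n_sub2_neq0.
lra.
Qed.

Lemma horizontal_gpow x k : horizontal x -> horizontal (gpow x k).
Proof.
move=> hx; have gpow_sq l : gpow (mul x x) l = gpow x (l + l).
  by elim: l => [|l IH] //=; rewrite IH ?addnS ?addSn /= gmulA.
by rewrite /horizontal -gpowD -gpow_sq hx wdil_gpow // ltr0Sn.
Qed.

Lemma horizontal_wdil x r : 0 < r -> horizontal x -> horizontal (wdil w r x).
Proof. by move=> r_gt0 hx; rewrite /horizontal -gdil_morph // hx !wdilM mulrC. Qed.

Lemma gpow_horizontal x k : horizontal x -> gpow x k = wdil w k%:R x.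
Proof.
move=> hx; case: k => [|k]; first by rewrite /= wdil0x.
apply: horizontal_unique; [exact: horizontal_gpow|exact: horizontal_wdil (ltr0Sn _ _) hx|].
by move=> j wj; rewrite gpow_w1 // wdilE wj expr1.
Qed.

Lemma horizontal_natD x (k l : nat) : horizontal x ->
  mul (wdil w k%:R x) (wdil w l%:R x) = wdil w (k + l)%:R x.
Proof. by move=> hx; rewrite -!gpow_horizontal // gpowD. Qed.

Lemma gmul_entry_poly i (pa pb : 'I_n -> {poly R}) : exists P : {poly R},
  forall t, mul (\row_k (pa k).[t]) (\row_k (pb k).[t]) 0 i = P.[t].
Proof.
have [s sE] := @gmul_poly _ G i.
pose p (j : 'I_(n + n)) := match fintype.split j with inl k => pa k | inr k => pb k end.
exists (\sum_(m <- s) m.1 *: \prod_(j < n + n) p j ^+ m.2 j) => t.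
have := sE (row_mx (\row_k (pa k).[t]) (\row_k (pb k).[t])).
rewrite row_mxKl row_mxKr => ->; rewrite horner_sum; apply: eq_bigr => m _.
rewrite hornerZ horner_prod; congr (_ * _); apply: eq_bigr => j _.
by rewrite horner_exp /p !mxE; case: (fintype.split j) => k; rewrite mxE.
Qed.

Lemma wdil_row_poly (x : V) t : wdil w t x = \row_k ('X^(w k) * (x 0 k)%:P).[t].
Proof. by apply/rowP => k; rewrite !mxE hornerM hornerXn hornerC. Qed.

Lemma row_polyC (x : V) t : x = \row_k ((x 0 k)%:P).[t].
Proof. by apply/rowP => k; rewrite !mxE hornerC. Qed.

Lemma gmul_wdil_poly_l (x y : V) i : exists P : {poly R},
  forall s, mul (wdil w s x) y 0 i = P.[s].
Proof.
have [P PE] := gmul_entry_poly i (fun k => 'X^(w k) * (x 0 k)%:P) (fun k => (y 0 k)%:P).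
by exists P => s; rewrite -PE -wdil_row_poly -row_polyC.
Qed.

Lemma gmul_wdil_poly_r (x y : V) i : exists P : {poly R},
  forall t, mul y (wdil w t x) 0 i = P.[t].
Proof.
have [P PE] := gmul_entry_poly i (fun k => (y 0 k)%:P) (fun k => 'X^(w k) * (x 0 k)%:P).
by exists P => t; rewrite -PE -wdil_row_poly -row_polyC.
Qed.

(* Both sides are polynomial in s and in t, and agree at positive integers. *)
Lemma horizontal_wdilD x s t : horizontal x ->
  mul (wdil w s x) (wdil w t x) = wdil w (s + t) x.
Proof.
move=> hx.
have wdil_shift c i : exists Q : {poly R}, forall u, wdil w (c + u) x 0 i = Q.[u].
  exists ((c%:P + 'X) ^+ w i * (x 0 i)%:P) => u.
  by rewrite mxE hornerM horner_exp hornerD hornerX !hornerC.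
have natS (l : nat) u : mul (wdil w u x) (wdil w l.+1%:R x) = wdil w (u + l.+1%:R) x.
  apply/rowP => i; move: u; apply: eq_poly_fun_natS.
  - exact: gmul_wdil_poly_l.
  - by have [Q QE] := wdil_shift l.+1%:R i; exists Q => u; rewrite addrC.
  - by move=> k; rewrite horizontal_natD // natrD.
apply/rowP => i; move: t; apply: eq_poly_fun_natS.
- exact: gmul_wdil_poly_r.
- exact: wdil_shift.
- by move=> k; rewrite natS.
Qed.

Lemma homogeneous_horizontal_line (x : V) k : w k = 1%N -> x 0 k != 0 -> horizontal x ->
  homogeneous G (range (fun t : R => wdil w t x)).
Proof.
move=> wk xk hx; split; [split; [|split]|split; [|split]].
- by exists 0 => //; rewrite wdil0x.
- by move=> _ _ [s _ <-] [t _ <-]; exists (s + t) => //; rewrite horizontal_wdilD.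
- move=> _ [s _ <-]; exists (- s) => //; symmetry; apply: ginv_unique.
  by rewrite horizontal_wdilD // subrr wdil0x.
- have -> : range (fun t : R => wdil w t x) = [set g : 'rV[R^o]_n |
      forall i, g 0 i = (('X * ((x 0 k)^-1)%:P) ^+ w i * (x 0 i)%:P).[g 0 k]].
    apply/seteqP; split=> [_ [t _ <-] i|g gE] /=.
      by rewrite !mxE hornerM horner_exp hornerM hornerX !hornerC wk expr1 mulfK.
    exists (g 0 k / x 0 k) => //; apply/rowP => i.
    by rewrite [RHS]gE mxE hornerM horner_exp hornerM hornerX !hornerC.
  exact: closed_poly_graph.
- apply: connected_range.
  have -> : (fun t : R => (wdil w t x : 'rV[R^o]_n)) =
            (fun t => \row_i (('X ^+ w i * (x 0 i)%:P).[t] : R^o)).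
    by apply/funext => t; apply/rowP => i; rewrite !mxE hornerM hornerXn hornerC.
  by apply: continuous_row => i; exact: continuous_horner.
- by move=> r _ r_gt0 [t _ <-]; exists (r * t) => //; rewrite /dil wdilM.
Qed.

Lemma hhom_to_R_coord {k} : w k = 1%N -> hhom_to_R G (fun g : 'rV[R^o]_n => g 0 k).
Proof. by move=> wk; split=> [a b|r a r_gt0]; rewrite ?gmul_w1 // /dil mxE wk expr1. Qed.

Lemma homogeneous_coord_ker k : w k = 1%N -> homogeneous G [set g : 'rV[R^o]_n | g 0 k = 0].
Proof.
move=> wk; split; [split; [|split]|split; [|split]].
- by rewrite /= mxE.
- by move=> a b /= ak bk; rewrite gmul_w1 // ak bk addr0.
- by move=> a /= ak; rewrite ginv_w1 // ak oppr0.
- apply: (@preimage_closed _ _ (fun g : 'rV[R^o]_n => g 0 k) [set 0]).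
    by move=> g _; exact: coord_continuous.
  exact: closed_eq.
- exact: connected_coord_ker.
- by move=> r a r_gt0 /= ak; rewrite /dil mxE ak mulr0.
Qed.

Lemma normal_coord_ker k : w k = 1%N -> normal G [set g : 'rV[R^o]_n | g 0 k = 0].
Proof. by move=> wk g a /= ak; rewrite !gmul_w1 // ginv_w1 // ak; ring. Qed.

Section HomToR.
Context {phi : 'rV[R^o]_n -> R}.
Hypothesis phiM : forall x y, phi (mul x y) = phi x + phi y.

Lemma hom_to_R0 : phi 0 = 0.
Proof. by apply: (addrI (phi 0)); rewrite -phiM gmul0x addr0. Qed.

Lemma hom_to_R_ginv a : phi (inv a) = - phi a.
Proof. by apply/eqP; rewrite -addr_eq0 addrC -phiM gmulxV hom_to_R0. Qed.

Lemma hom_to_R_gpow a k : phi (gpow a k) = k%:R * phi a.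
Proof.
elim: k => [|k IH] /=; first by rewrite hom_to_R0 mul0r.
by rewrite phiM IH -[k.+1]addn1 natrD; ring.
Qed.

Hypothesis phiZ : forall r x, 0 < r -> phi (dil G r x) = r * phi x.

(* For h in filt m, h^(2^m) and wdil 2 h differ by an element of filt m.+1, while phi
   multiplies them by 2^m and 2; descending induction on m. *)
Lemma hom_to_R_filt2 h : filt 2 h -> phi h = 0.
Proof.
suff ind d m h' : (\max_(j < n) w j < m + d)%N -> (1 < m)%N -> filt m h' -> phi h' = 0.
  by move=> h2; apply: (ind (\max_(j < n) w j).+1 2%N) => //; lia.
elim: d m h' => [|d IH] m h' wmax m_gt1 hm.
  suff -> : h' = 0 by exact: hom_to_R0.
  apply/rowP => j; rewrite mxE; apply: hm; rewrite addn0 in wmax.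
  exact: leq_ltn_trans (leq_bigmax j) wmax.
pose y := gpow h' (2 ^ m)%N; pose z := wdil w 2 h'.
have [ym yE] := gpow_filt (2 ^ m)%N hm.
have zm : filt m z by move=> j wj; rewrite wdilE hm // mulr0.
have e_next : filt m.+1 (mul (inv y) z).
  move=> j wj; have [wjm|wjm] := ltnP (w j) m; first exact: filt_gmul (filt_ginv ym) zm j wjm.
  have wjE : w j = m by lia.
  rewrite (gmul_filt_entry (filt_ginv ym) zm) ?wjE // (ginv_filt_entry ym) ?wjE //.
  by rewrite yE ?wjE // wdilE wjE natrX addNr.
have : phi z = phi y.
  have zE : mul y (mul (inv y) z) = z by rewrite gmulA gmulxV gmul0x.
  by rewrite -zE phiM (IH m.+1 _ _ _ e_next) ?addr0 //; lia.
rewrite /z phiZ // /y hom_to_R_gpow natrX => /eqP.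
rewrite -subr_eq0 -mulrBl mulf_eq0 => /orP [|/eqP //].
by rewrite -oppr_eq0 opprB (negbTE (expr2n_sub2_neq0 R m_gt1)).
Qed.

End HomToR.

Lemma complementary_section (psi : R -> V) (phi : 'rV[R^o]_n -> R)
    (H N : set 'rV[R^o]_n) c :
  c != 0 -> (forall s t, psi (s + t) = mul (psi s) (psi t)) ->
  (forall x y, phi (mul x y) = phi x + phi y) -> (forall t, phi (psi t) = t * c) ->
  (forall x, H x <-> exists t, psi t = x) -> (forall x, N x <-> phi x = 0) ->
  complementary G H N.
Proof.
move=> c0 psiD phiM phipsi HE NE; split.
  move=> g; pose a := psi (phi g / c).
  exists a, (mul (inv a) g); split; first by apply/HE; exists (phi g / c).
  split; last by rewrite gmulA gmulxV gmul0x.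
  by apply/NE; rewrite phiM hom_to_R_ginv // phipsi divfK // addNr.
move=> _ /HE [t <-] /NE; rewrite phipsi => /eqP.
rewrite mulf_eq0 (negbTE c0) orbF => /eqP ->.
by apply: gmul_idem_eq0; rewrite -psiD addr0.
Qed.

Lemma horizontal_neq0_w1 x : horizontal x -> x != 0 -> exists2 k, w k = 1%N & x 0 k != 0.
Proof.
move=> hx /eqP x0.
have [/existsP [k /andP [/eqP wk xk]]|/existsPn none] :=
  boolP [exists k, (w k == 1%N) && (x 0 k != 0)]; first by exists k.
case: x0; apply: horizontal_unique => // [|j wj]; first by rewrite /horizontal gmul0x wdilx0.
by have := none j; rewrite wj eqxx negbK mxE => /eqP.
Qed.

Lemma bracket0l (Y : 'rV[R^o]_n) : bracket G 0 Y = 0.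
Proof.
rewrite /bracket.
have -> : (fun t : R => t^-2 *: gcomm G (t *: (0 : 'rV[R^o]_n)) (t *: Y)) = fun _ => 0.
  apply/funext => t; rewrite scaler0 /gcomm gmul0x.
  have -> : ginv G (0 : 'rV[R^o]_n) = 0 by exact: ginv0.
  by rewrite gmulx0 gmulxV scaler0.
by rewrite lim_cst //; exact: norm_hausdorff.
Qed.

(* A layer V_j with j > 1 is spanned by brackets with V_1, so V_1 = 0 would force all
   layers, hence the whole of R^n, to vanish. *)
Lemma stratified_w1 : (0 < n)%N -> stratified G -> exists k, w k = 1%N.
Proof.
move=> n_gt0 strat.
have [/existsP [k /eqP wk]|/existsPn no_w1] := boolP [exists k, w k == 1%N].
  by exists k.
exfalso; pose i0 : 'I_n := Ordinal n_gt0.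
have wi0 : (1 < w i0)%N by have := @gwt_pos _ G i0; have := no_w1 i0; lia.
have layer1 X : layer G 1 X -> X = 0.
  by move=> X1; apply/rowP => i; rewrite mxE; apply: X1; exact: no_w1.
pose e : 'rV[R^o]_n := \row_j (if j == i0 then 1 else 0).
have : layer G (w i0) e.
  by move=> i; rewrite mxE; case: (i =P i0) => [->|//]; rewrite eqxx.
rewrite -(prednK (ltnW wi0)) strat; last by rewrite -ltnS prednK // ltnW.
move=> [s [s_layer eE]].
have : e = 0 by rewrite eE big_seq big1 // => p /s_layer [/layer1 -> _]; exact: bracket0l.
by move/(congr1 (fun v : 'rV[R^o]_n => v 0 i0)); rewrite !mxE eqxx => /eqP; rewrite oner_eq0.
Qed.

Lemma quotient_R_coord k : w k = 1%N ->
  exists N, homogeneous G N /\ normal G N /\ quotient_is_R G N.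
Proof.
move=> wk; exists [set g | g 0 k = 0]; split; first exact: homogeneous_coord_ker.
split; first exact: normal_coord_ker.
exists (fun g => g 0 k); split; first exact: hhom_to_R_coord.
split=> [t|g //]; by exists (\row_j (if j == k then t else 0)); rewrite mxE eqxx.
Qed.

Lemma quotient_R_complement N : quotient_is_R G N ->
  exists H, homogeneous G H /\ complementary G H N.
Proof.
move=> [phi [[phiM phiZ] [phi_onto NE]]].
have [g g1] := phi_onto 1.
have [y [hy yg]] := horizontal_exists g.
have phiy : phi y = 1.
  have : filt 2 (mul (inv y) g).
    move=> j wj; have wj1 : w j = 1%N by have := @gwt_pos _ G j; lia.
    by rewrite gmul_w1 // ginv_w1 // yg // addNr.
  by move/(hom_to_R_filt2 phiM phiZ); rewrite phiM hom_to_R_ginv // g1 => e; lra.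
have [k wk yk] : exists2 k, w k = 1%N & y 0 k != 0.
  apply: horizontal_neq0_w1 hy _; apply/eqP => y0.
  by move: phiy; rewrite y0 hom_to_R0 // => /eqP; rewrite eq_sym oner_eq0.
exists (range (fun t => wdil w t y)); split; first exact: homogeneous_horizontal_line wk yk hy.
apply: (@complementary_section (fun t => wdil w t y) phi _ _ 1) => //.
- by move=> s t; rewrite horizontal_wdilD.
- move=> t; rewrite (@additive_pos_homog_linear _ (fun t => phi (wdil w t y))) ?wdil1 ?phiy //.
    by move=> s u; rewrite -horizontal_wdilD // phiM.
  by move=> r u r_gt0 /=; rewrite -wdilM -phiZ.
- by move=> z; split=> [[t _ <-]|[t <-]]; exists t.
- by move=> z; rewrite NE.
Qed.

Lemma subgroup_R_horizontal_line k : w k = 1%N ->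
  exists H, homogeneous G H /\ subgroup_is_R G H.
Proof.
move=> wk; have [x [hx xE]] := horizontal_exists (\row_j (if j == k then 1 else 0)).
have xk : x 0 k = 1 by rewrite xE // mxE eqxx.
exists (range (fun t => wdil w t x)); split.
  by apply: homogeneous_horizontal_line wk _ hx; rewrite xk oner_neq0.
exists (fun t => wdil w t x); split; [split|split].
- by move=> s t; rewrite horizontal_wdilD.
- by move=> r t _; rewrite /dil wdilM.
- by move=> s t /(congr1 (fun v : V => v 0 k)); rewrite !wdilE wk !expr1 xk !mulr1.
- by move=> z; split=> [[t _ <-]|[t <-]]; exists t.
Qed.

Lemma subgroup_R_complement H : subgroup_is_R G H ->
  exists N, homogeneous G N /\ normal G N /\ complementary G H N.
Proof.
move=> [psi [[psiD psiZ] [psi_inj HE]]].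
have psi0 : psi 0 = 0 by apply: gmul_idem_eq0; rewrite -psiD addr0.
have hpsi1 : horizontal (psi 1).
  by rewrite /horizontal -psiD -[1 + 1]mulr1 psiZ.
have [k wk psi1k] : exists2 k, w k = 1%N & psi 1 0 k != 0.
  apply: horizontal_neq0_w1 hpsi1 _; apply/eqP => psi1_0.
  by have /eqP := psi_inj 1 0 (etrans psi1_0 (esym psi0)); rewrite oner_eq0.
exists [set g | g 0 k = 0]; split; first exact: homogeneous_coord_ker.
split; first exact: normal_coord_ker.
have [coordM coordZ] := hhom_to_R_coord wk.
apply: (@complementary_section psi (fun g => g 0 k) _ _ (psi 1 0 k)) => // t.
rewrite (@additive_pos_homog_linear _ (fun t => psi t 0 k)) // => [s u|r u r_gt0] /=.
  by rewrite psiD coordM.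
by rewrite psiZ // coordZ.
Qed.

End GradedGroup.

Theorem proposition11p14 (R : realType) (G : gradedGroup R) :
  (0 < gdim G)%N -> stratified G ->
  ( (exists N, homogeneous G N /\ normal G N /\ quotient_is_R G N) /\
    (forall N, homogeneous G N -> normal G N -> quotient_is_R G N ->
       exists H, homogeneous G H /\ complementary G H N) ) /\
  ( (exists H, homogeneous G H /\ subgroup_is_R G H) /\
    (forall H, homogeneous G H -> subgroup_is_R G H ->
       exists N, homogeneous G N /\ normal G N /\ complementary G H N) ).
Proof.
move=> n_gt0 strat; have [k wk] := stratified_w1 n_gt0 strat.
split; split.
- exact: quotient_R_coord wk.
- by move=> N _ _; exact: quotient_R_complement.
- exact: subgroup_R_horizontal_line wk.
- by move=> H _; exact: subgroup_R_complement.
Qed.
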